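(* Let $B$ be a path-connected space and $p\colon E\to B$ a disk-hedgehog covering with $E$ a Peano space; let $e_0\in E$, $b_0=p(e_0)$ and $F=p^{-1}(b_0)$. Then the Peano fibered product $q$ of the family of pointed coverings $\{p\colon(E,e)\to(B,b_0)\}_{e\in F}$ (based at $\{e\}_{e\in F}$) is regular.
   Context: All maps are continuous; a Peano space is a connected, locally path-connected space. The Peanification of a space $Y$ is the set $Y$ with the topology whose basis consists of path components of open subsets of $Y$. For a class $\mathcal{P}$ of spaces, $p\colon E\to B$ is a $\mathcal{P}$-covering if for every $e_0\in E$, $X\in\mathcal{P}$, $x_0\in X$ and map $f\colon X\to B$ with $f(x_0)=p(e_0)$ there is a unique map $g\colon X\to E$ with $p\circ g=f$, $g(x_0)=e_0$. A directed wedge is $(Z,z_0)=\bigvee_{s\in S}(Z_s,z_s)$, a wedge of pointed Peano spaces indexed by a directed set $S$, topologized so that $U\subset Z\setminus\{z_0\}$ is open iff each $U\cap Z_s$ is open, and $U\ni z_0$ is an open neighborhood of $z_0$ iff each $U\cap Z_s$ is open and there is $t\in S$ with $Z_s\subset U$ for all $s>t$. A disk-hedgehog is a directed wedge with each $Z_s\cong D^2$; a disk-hedgehog covering is a $\mathcal{P}$-covering for $\mathcal{P}$ the class of all disk-hedgehogs. The Peano fibered product of pointed coverings $\{(p_s,e_s)\}_{s\in S}$ over $B$ is $(p,e)$ where $e=\{e_s\}$, the total space is the Peanification of the path component of $e$ in $\{\{x_s\}\in\prod_sE_s: p_s(x_s)=p_t(x_t)\ \forall s,t\}$, and $p(\{x_s\})=p_t(x_t)$.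 A covering is regular if for every loop $\alpha$ in the base either all its lifts are loops or none are. *)

From HB Require Import structures.
From mathcomp Require Import all_boot all_order all_algebra.
From mathcomp Require Import all_classical all_reals all_analysis.
From mathcomp Require Import Rstruct Rstruct_topology.
Unset Printing Implicit Defensive.
Import Order.TTheory GRing.Theory Num.Theory.
Local Open Scope classical_set_scope.
Local Open Scope ring_scope.

Notation R := Rdefinitions.R (only parsing).
(* Spaces given by open sets.  A "space" is a carrier set A : set T together *)
(* with a family tau : set (set T) of open sets (all contained in A).        *)
(* A MathComp topologicalType X is the space (setT, topen X).               *)

Definition topen (X : topologicalType) : set (set X) := [set U | open U].

Definition subspace_opens {T : Type} (A : set T) (tau : set (set T)) : set (set T) :=
  [set U | exists V, tau V /\ U = V `&` A].

Definition cont_on {T S : Type} (A : set T) (tau : set (set T))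
    (C : set S) (sigma : set (set S)) (f : T -> S) : Prop :=
  (forall x, A x -> C (f x)) /\ (forall V, sigma V -> tau (A `&` f @^-1` V)).

Definition unit_I : set R := [set t | 0 <= t <= 1].
Definition unit_I_opens : set (set R) := subspace_opens unit_I (topen R).

Definition path_in {T : Type} (A : set T) (tau : set (set T)) (U : set T)
    (g : R -> T) (x y : T) : Prop :=
  [/\ cont_on unit_I unit_I_opens A tau g, (forall t, unit_I t -> U (g t)),
      g 0 = x & g 1 = y].

Definition path_comp {T : Type} (A : set T) (tau : set (set T)) (U : set T)
    (x : T) : set T :=
  [set y | exists g, path_in A tau U g x y].

Definition path_connected_set {T : Type} (A : set T) (tau : set (set T))
    (U : set T) : Prop :=
  forall x y, U x -> U y -> exists g, path_in A tau U g x y.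

Definition locally_path_connected {T : Type} (A : set T) (tau : set (set T)) : Prop :=
  forall U x, tau U -> U x ->
    exists V, [/\ tau V, V x, V `<=` U & path_connected_set A tau V].

Definition peano_space (X : topologicalType) : Prop :=
  connected [set: X] /\ locally_path_connected setT (topen X).

(* Peanification: topology generated by the basis of path components of open
   sets, i.e. W is open iff every x in W lies in a path component of some
   open U (the one of x) contained in W. *)
Definition peanification {T : Type} (A : set T) (tau : set (set T)) : set (set T) :=
  [set W | W `<=` A /\
    forall x, W x -> exists U, [/\ tau U, U x & path_comp A tau U x `<=` W]].

Definition directed_set {S : Type} (le : S -> S -> Prop) : Prop :=
  [/\ inhabited S, (forall s, le s s),
      (forall s t u, le s t -> le t u -> le s u) &
      (forall s t, exists u, le s u /\ le t u)].

Definition gt_of {S : Type} (le : S -> S -> Prop) (s t : S) : Prop :=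
  le t s /\ ~ le s t.

Definition disk : set (R * R) := [set x | x.1 ^+ 2 + x.2 ^+ 2 <= 1].
Definition disk_opens : set (set (R * R)) := subspace_opens disk (topen (R * R)%type).

(* Points of the wedge: None is the wedge point z0, Some (s, x) is the point
   x (<> c s) of the s-th copy of the disk, whose base point is c s. *)
Definition hh_point (S : Type) := option (S * (R * R)).

Definition hh_incl {S : Type} (c : S -> R * R) (s : S) (x : R * R) : hh_point S :=
  if x == c s then None else Some (s, x).

Definition hh_carrier {S : Type} (c : S -> R * R) : set (hh_point S) :=
  [set z | match z with None => True | Some (s, x) => disk x /\ x <> c s end].

Definition hh_opens {S : Type} (le : S -> S -> Prop) (c : S -> R * R)
    : set (set (hh_point S)) :=
  [set U | [/\ U `<=` hh_carrier c,
    (forall s, disk_opens (disk `&` hh_incl c s @^-1` U)) &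
    (U None -> exists t, forall s, gt_of le s t ->
                 forall x, disk x -> U (hh_incl c s x))]].

Definition disk_hedgehog_covering {E B : topologicalType} (p : E -> B) : Prop :=
  continuous p /\
  forall (e0 : E) (S : Type) (le : S -> S -> Prop) (c : S -> R * R),
    directed_set le -> (forall s, disk (c s)) ->
    forall (x0 : hh_point S) (f : hh_point S -> B),
      hh_carrier c x0 ->
      cont_on (hh_carrier c) (hh_opens le c) setT (topen B) f ->
      f x0 = p e0 ->
      let is_lift (g : hh_point S -> E) :=
        [/\ cont_on (hh_carrier c) (hh_opens le c) setT (topen E) g,
            (forall z, hh_carrier c z -> p (g z) = f z) & g x0 = e0] in
      (exists g, is_lift g) /\
      (forall g1 g2, is_lift g1 -> is_lift g2 ->
         forall z, hh_carrier c z -> g1 z = g2 z).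

Definition fiber_idx {E B : Type} (p : E -> B) (b0 : B) := {e : E | p e = b0}.

Definition prod_opens {I : Type} {X : topologicalType} : set (set (I -> X)) :=
  [set W | forall x, W x -> exists (J : set I) (V : I -> set X),
     [/\ finite_set J, (forall i, J i -> open (V i) /\ V i (x i)) &
         [set y | forall i, J i -> V i (y i)] `<=` W]].

Definition fibered_set {I : Type} {E B : Type} (p : E -> B) : set (I -> E) :=
  [set x | forall s t, p (x s) = p (x t)].

Definition pfp_base {E B : Type} (p : E -> B) (b0 : B) : fiber_idx p b0 -> E :=
  fun i => sval i.

Definition pfp_carrier {E B : topologicalType} (p : E -> B) (b0 : B)
    : set (fiber_idx p b0 -> E) :=
  path_comp setT prod_opens (fibered_set p) (pfp_base p b0).

Definition pfp_opens {E B : topologicalType} (p : E -> B) (b0 : B)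
    : set (set (fiber_idx p b0 -> E)) :=
  peanification (pfp_carrier p b0) (subspace_opens (pfp_carrier p b0) prod_opens).

(* the projection, x |-> p_t(x_t), here with t = e0 *)
Definition pfp_proj {E B : Type} (p : E -> B) (e0 : E)
    : (fiber_idx p (p e0) -> E) -> B :=
  fun x => p (x (exist _ e0 erefl)).

Definition regular_covering {T : Type} (A : set T) (tau : set (set T))
    {B : topologicalType} (q : T -> B) : Prop :=
  forall alpha : R -> B,
    cont_on unit_I unit_I_opens setT (topen B) alpha -> alpha 0 = alpha 1 ->
    let is_lift (g : R -> T) :=
      cont_on unit_I unit_I_opens A tau g /\
      (forall t, unit_I t -> q (g t) = alpha t) in
    (forall g, is_lift g -> g 0 = g 1) \/ (forall g, is_lift g -> g 0 <> g 1).

From mathcomp Require Import all_boot all_order all_algebra.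
From mathcomp Require Import all_classical all_reals all_analysis.
From mathcomp Require Import Rstruct Rstruct_topology.
From mathcomp Require Import ring lra.
Import Order.TTheory GRing.Theory Num.Theory.
Import numFieldNormedType.Exports.
Local Open Scope classical_set_scope.
Local Open Scope ring_scope.

(* A disk-hedgehog covering has unique path lifting (a single disk is a
   disk-hedgehog).  Let g be a closed lift of the loop alpha to the fibered
   product and h any lift.  Every point h_0(e) is a coordinate g_0(e') of g_0:
   transport h_0(e) back to the fibre over b0 along the path joining {e}_e to
   g_0; the coordinates of that path all lift one path of B, so by uniqueness
   the one starting at the transported point e' ends at h_0(e).  Then the
   coordinate paths h(e) and g(e') lift alpha from the same point, hence
   h_1(e) = g_1(e') = g_0(e') = h_0(e). *)

Lemma cont_on_comp {T S U : Type} {A : set T} {tA : set (set T)}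
    {C : set S} {tC : set (set S)} {D : set U} {tD : set (set U)}
    {f : T -> S} {g : S -> U} :
  cont_on A tA C tC f -> cont_on C tC D tD g -> cont_on A tA D tD (g \o f).
Proof.
move=> [fAC fo] [gCD go]; split=> [x /fAC /gCD //|V /go /fo].
suff -> : A `&` f @^-1` (C `&` g @^-1` V) = A `&` (g \o f) @^-1` V by [].
apply/seteqP; split=> x /=; first by case=> Ax [].
by case=> Ax gfx; do 2?split=> //; exact: fAC.
Qed.

Lemma continuous_cont_on {T S : topologicalType} {f : T -> S} :
  continuous f -> cont_on setT (topen T) setT (topen S) f.
Proof.
by move=> fc; split=> // V oV; rewrite setTI; exact: open_comp oV.
Qed.

Lemma continuous_cont_on_subspace {T S : topologicalType} (A : set T)
    (C : set S) (f : T -> S) :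
  continuous f -> (forall x, A x -> C (f x)) ->
  cont_on A (subspace_opens A (topen T)) C (subspace_opens C (topen S)) f.
Proof.
move=> fc fAC; split=> // _ [W [oW ->]].
exists (f @^-1` W); split; first exact: open_comp oW.
apply/seteqP; split=> x /=; first by case=> Ax [].
by case=> Wfx Ax; do 2?split=> //; exact: fAC.
Qed.

Lemma path_comp_sub {T : Type} (A : set T) (tau : set (set T)) (U : set T)
    (x : T) :
  path_comp A tau U x `<=` U.
Proof.
move=> y [g [_ gU _ <-]]; apply: gU.
by rewrite /unit_I /= ler01 lexx.
Qed.

Lemma peanification_subspace {T : Type} {A : set T} {tau : set (set T)}
    {W : set T} :
  subspace_opens A tau W -> peanification A (subspace_opens A tau) W.
Proof.
move=> oW; split; first by case: oW => V [_ ->] x [].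
by move=> x Wx; exists W; split=> //; exact: path_comp_sub.
Qed.

Lemma cont_on_peanification {T U : Type} {D : set U} {tD : set (set U)}
    {A : set T} {tau : set (set T)} {g : U -> T} :
  cont_on D tD A (peanification A (subspace_opens A tau)) g ->
  cont_on D tD setT tau g.
Proof.
move=> [gDA go]; split=> // V oV.
have oVA : subspace_opens A tau (V `&` A) by exists V.
have := go _ (peanification_subspace oVA).
suff -> : D `&` g @^-1` (V `&` A) = D `&` g @^-1` V by [].
apply/seteqP; split=> u /=; first by case=> Du [].
by case=> Du Vgu; do 2?split=> //; exact: gDA.
Qed.

Lemma prod_opens_coord {I : Type} {X : topologicalType} (i : I) (V : set X) :
  open V -> prod_opens [set x : I -> X | V (x i)].
Proof.
move=> oV x Vxi; exists [set i], (fun=> V); split; first exact: finite_set1.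
  by move=> _ ->.
by move=> y; apply.
Qed.

Lemma cont_on_coord {I U : Type} {X : topologicalType} {D : set U}
    {tD : set (set U)} {g : U -> I -> X} (i : I) :
  cont_on D tD setT prod_opens g -> cont_on D tD setT (topen X) (g^~ i).
Proof. by case=> _ go; split=> // V /(prod_opens_coord i)/go. Qed.

Lemma unit_I0 : unit_I 0. Proof. by rewrite /unit_I /= lexx ler01. Qed.
Lemma unit_I1 : unit_I 1. Proof. by rewrite /unit_I /= lexx ler01. Qed.

Lemma unit_I_rev t : unit_I t -> unit_I (1 - t).
Proof. by rewrite /unit_I /= => /andP[t0 t1]; apply/andP; split; lra. Qed.

Lemma continuous_rev (K : realType) : continuous (fun t : K => 1 - t).
Proof. by move=> t; exact: (continuousB (cvg_cst _) cvg_id). Qed.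

Lemma cont_on_rev :
  cont_on unit_I unit_I_opens unit_I unit_I_opens (fun t : R => 1 - t).
Proof.
exact: continuous_cont_on_subspace (continuous_rev _) unit_I_rev.
Qed.

(* The one-disk hedgehog based at (-1, 0).  Its horizontal diameter is a
   retract, so a path beta of B lifts by lifting beta \o diameter_retract and
   restricting to the diameter. *)
Definition unit_le (s t : unit) : Prop := True.
Definition west_pole (s : unit) : R * R := (-1, 0).
Definition diameter_retract (z : hh_point unit) : R :=
  if z is Some (_, x) then (x.1 + 1) / 2 else 0.
Definition diameter_path (t : R) : hh_point unit :=
  hh_incl west_pole tt (2 * t - 1, 0).

Lemma unit_le_directed : directed_set unit_le.
Proof. by split=> // s t; exists tt. Qed.

Lemma west_pole_disk s : disk (west_pole s).
Proof. by rewrite /disk /west_pole /=; lra. Qed.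

Lemma continuous_diameter_retract (K : realType) :
  continuous (fun x : K * K => (x.1 + 1) / 2).
Proof.
by move=> x; exact: (continuousM (continuousD cvg_fst (cvg_cst _)) (cvg_cst _)).
Qed.

Lemma continuous_diameter_path (K : realType) :
  continuous (fun t : K => (2 * t - 1, 0 : K)).
Proof.
move=> t.
exact: (cvg_pair (continuousB (continuousM (cvg_cst _) cvg_id) (cvg_cst _))
          (cvg_cst _)).
Qed.

Lemma diameter_retract_incl x :
  diameter_retract (hh_incl west_pole tt x) = (x.1 + 1) / 2.
Proof. by rewrite /hh_incl; case: eqP => [->|] //=; rewrite addNr mul0r. Qed.

Lemma hh_incl_carrier {x} : disk x -> hh_carrier west_pole (hh_incl west_pole tt x).
Proof. by rewrite /hh_incl; case: eqP. Qed.

Lemma diameter_retract_unit_I {z} :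
  hh_carrier west_pole z -> unit_I (diameter_retract z).
Proof.
case: z => [[s x] [dx _]|_]; last exact: unit_I0.
by move: dx; rewrite /disk /unit_I /= => dx; apply/andP; split; nra.
Qed.

Lemma diameter_pathK t : diameter_retract (diameter_path t) = t.
Proof. by rewrite diameter_retract_incl /=; field. Qed.

Lemma diameter_path_disk t : unit_I t -> disk (2 * t - 1, 0).
Proof. by rewrite /unit_I /disk /= => /andP[t0 t1]; nra. Qed.

Lemma diameter_path_carrier {t} :
  unit_I t -> hh_carrier west_pole (diameter_path t).
Proof. by move=> /diameter_path_disk/hh_incl_carrier. Qed.

Lemma diameter_path0 : diameter_path 0 = None.
Proof.
by rewrite /diameter_path /hh_incl mulr0 sub0r /west_pole eqxx.
Qed.

Lemma cont_on_diameter_retract :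
  cont_on (hh_carrier west_pole) (hh_opens unit_le west_pole)
    unit_I unit_I_opens diameter_retract.
Proof.
split=> [|_ [W [oW ->]]]; first by move=> z /diameter_retract_unit_I.
split; [by move=> z [] | case | by move=> _; exists tt => s [_ []]].
exists [set x | W ((x.1 + 1) / 2)].
split; first exact: (open_comp (fun x _ => continuous_diameter_retract R x) oW).
apply/seteqP; split=> x /=.
  by case=> dx [_ []]; rewrite diameter_retract_incl.
case=> Wx dx; have Cx := hh_incl_carrier dx.
have := diameter_retract_unit_I Cx.
by rewrite diameter_retract_incl.
Qed.

Lemma cont_on_diameter_path :
  cont_on unit_I unit_I_opens (hh_carrier west_pole)
    (hh_opens unit_le west_pole) diameter_path.
Proof.
split=> [|U [_ Uslice _]]; first by move=> t /diameter_path_carrier.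
have [V [oV eV]] := Uslice tt.
exists [set t | V (2 * t - 1, 0)].
split; first exact: (open_comp (fun t _ => continuous_diameter_path R t) oV).
apply/seteqP; split=> t /= [It Ht]; split=> //.
  have : (disk `&` hh_incl west_pole tt @^-1` U) (2 * t - 1, 0).
    by split=> //; exact: diameter_path_disk.
  by rewrite eV => -[].
have : (V `&` disk) (2 * t - 1, 0) by split=> //; exact: diameter_path_disk.
by rewrite -eV => -[].
Qed.

Local Notation path_on X := (cont_on unit_I unit_I_opens [set: X] (topen X)).
Local Notation pfp_path p b0 :=
  (cont_on unit_I unit_I_opens (pfp_carrier p b0) (pfp_opens p b0)).

Section DiskHedgehogCovering.

Context {E B : topologicalType} {p : E -> B}.
Hypothesis hp : disk_hedgehog_covering p.

Lemma path_lift_ex (beta : R -> B) (e : E) :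
  path_on B beta -> p e = beta 0 ->
  exists a : R -> E,
    [/\ path_on E a, forall t, unit_I t -> p (a t) = beta t & a 0 = e].
Proof.
move=> betac pe; have [_ lift] := hp.
have [[G [Gc Glift G0]] _] := lift e unit unit_le west_pole unit_le_directed
  west_pole_disk None (beta \o diameter_retract) I
  (cont_on_comp cont_on_diameter_retract betac) (esym pe).
exists (G \o diameter_path); split.
- exact: cont_on_comp cont_on_diameter_path Gc.
- by move=> t It; rewrite /= Glift /= ?diameter_pathK //; exact: diameter_path_carrier.
- by rewrite /= diameter_path0.
Qed.

Lemma path_lift_uniq {a b : R -> E} :
  path_on E a -> path_on E b ->
  (forall t, unit_I t -> p (a t) = p (b t)) -> a 0 = b 0 ->
  forall t, unit_I t -> a t = b t.
Proof.
move=> ac bc pab ab0 t It; have [pc lift] := hp.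
have pac := cont_on_comp ac (continuous_cont_on pc).
have [_ uniq] := lift (a 0) unit unit_le west_pole unit_le_directed
  west_pole_disk None ((p \o a) \o diameter_retract) I
  (cont_on_comp cont_on_diameter_retract pac) erefl.
have := uniq (a \o diameter_retract) (b \o diameter_retract) _ _
  (diameter_path t) (diameter_path_carrier It).
rewrite /= diameter_pathK; apply.
  by split=> //; exact: cont_on_comp cont_on_diameter_retract ac.
split=> //; first exact: cont_on_comp cont_on_diameter_retract bc.
by move=> z Cz /=; rewrite pab //; exact: diameter_retract_unit_I.
Qed.

Lemma pfp_carrier_fibered (b0 : B) : pfp_carrier p b0 `<=` fibered_set p.
Proof. exact: path_comp_sub. Qed.

Lemma cont_on_pfp_coord {b0 : B} {g : R -> fiber_idx p b0 -> E} i :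
  pfp_path p b0 g -> path_on E (g^~ i).
Proof. by move=> gc; exact: cont_on_coord i (cont_on_peanification gc). Qed.

Lemma pfp_carrier_coord_onto {b0 : B} {x : fiber_idx p b0 -> E}
    (j : fiber_idx p b0) {y : E} :
  pfp_carrier p b0 x -> p y = p (x j) -> exists i, x i = y.
Proof.
move=> [gam [gamc gamF gam0 gam1]] py.
pose beta t := p (gam (1 - t) j).
have betac : path_on B beta := cont_on_comp cont_on_rev
  (cont_on_comp (cont_on_coord j gamc) (continuous_cont_on hp.1)).
have [rho [rhoc rhoF rho0]] : exists rho : R -> E,
    [/\ path_on E rho, forall t, unit_I t -> p (rho t) = beta t & rho 0 = y].
  by apply: path_lift_ex => //; rewrite /beta subr0 gam1.
have rho1 : p (rho 1) = b0.
  rewrite rhoF; last exact: unit_I1.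
  by rewrite /beta /= subrr gam0; exact: (svalP j).
exists (exist _ (rho 1) rho1); rewrite -gam1 -rho0; apply/esym.
have := path_lift_uniq (cont_on_comp cont_on_rev rhoc)
  (cont_on_coord (exist _ (rho 1) rho1) gamc) _ _ 1 unit_I1.
rewrite /= subrr; apply=> [t It|]; last by rewrite subr0 gam0.
by rewrite rhoF ?/beta /= ?subKr; [exact: gamF | exact: unit_I_rev].
Qed.

Lemma pfp_lift_coord {e0 : E} {alpha : R -> B}
    {g : R -> fiber_idx p (p e0) -> E} :
  pfp_path p (p e0) g -> (forall t, unit_I t -> pfp_proj p e0 (g t) = alpha t) ->
  forall i t, unit_I t -> p (g t i) = alpha t.
Proof.
move=> [gC _] galpha i t It; rewrite -galpha //.
exact: (pfp_carrier_fibered _ _ (gC t It) i _).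
Qed.

Lemma pfp_lift_closed {e0 : E} {alpha : R -> B}
    {g h : R -> fiber_idx p (p e0) -> E} :
  pfp_path p (p e0) g -> (forall t, unit_I t -> pfp_proj p e0 (g t) = alpha t) ->
  pfp_path p (p e0) h -> (forall t, unit_I t -> pfp_proj p e0 (h t) = alpha t) ->
  g 0 = g 1 -> h 0 = h 1.
Proof.
move=> gc galpha hc halpha g01; apply: funext => e.
have pg := pfp_lift_coord gc galpha; have ph := pfp_lift_coord hc halpha.
pose i0 : fiber_idx p (p e0) := exist _ e0 erefl.
have [e' ge'] : exists e', g 0 e' = h 0 e.
  apply: (pfp_carrier_coord_onto i0 (gc.1 _ unit_I0)).
  by rewrite (pg _ _ unit_I0) (ph _ _ unit_I0).
have := path_lift_uniq (cont_on_pfp_coord e' gc) (cont_on_pfp_coord e hc)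
  _ ge' 1 unit_I1.
by rewrite -g01 ge'; apply=> t It; rewrite (pg _ _ It) (ph _ _ It).
Qed.

End DiskHedgehogCovering.

Theorem proposition5p8 (B E : topologicalType) (p : E -> B) (e0 : E) :
  path_connected_set setT (topen B) setT ->
  disk_hedgehog_covering p ->
  peano_space E ->
  regular_covering (pfp_carrier p (p e0)) (pfp_opens p (p e0)) (pfp_proj p e0).
Proof.
move=> _ hp _ alpha _ _ /=.
have [[g [[gc galpha] g01]]|no_closed] := pselect (exists g,
  (pfp_path p (p e0) g /\ forall t, unit_I t -> pfp_proj p e0 (g t) = alpha t)
  /\ g 0 = g 1).
  by left=> h [hc halpha]; apply: (pfp_lift_closed hp gc galpha hc halpha g01).
by right=> h hlift h01; apply: no_closed; exists h.
Qed.
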